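(* Let $E$ be a second countable Stone space with at least seven points, and let $\gamma$ be a non-peripheral cut of $E$. Then $\gamma$ is outermost if and only if for every pants decomposition $\Gamma$ of $E$ containing $\gamma$, the vertex $\gamma$ has valence at most two in the adjacency graph $A(\Gamma)$.
   Context: A Stone space is a compact, Hausdorff, totally disconnected space. A cut of $E$ is an unordered partition of $E$ into two disjoint clopen sets $U,V$, written $U\sqcup V$; it is non-peripheral if each of $U,V$ contains at least two points. A non-peripheral cut is outermost if one of its two sides contains exactly two points. Two cuts $U\sqcup V$, $U'\sqcup V'$ cross if all four sets $U\cap U'$, $U\cap V'$, $V\cap U'$, $V\cap V'$ are nonempty; otherwise they are compatible. A pants decomposition of $E$ is a countable collection $\Gamma$ of non-peripheral cuts such that: (1) any two cuts in $\Gamma$ are compatible; (2) every non-peripheral cut $\gamma\notin\Gamma$ crosses some cut of $\Gamma$; (3) every non-peripheral cut $\gamma\notin\Gamma$ crosses only finitely many cuts of $\Gamma$. Two cuts $\gamma_i,\gamma_j\in\Gamma$ are adjacent in $\Gamma$ if there is a non-peripheral cut crossing $\gamma_i$ and $\gamma_j$ and no other cut of $\Gamma$; the adjacency graph $A(\Gamma)$ has vertex set $\Gamma$ and edges between adjacent cuts. *)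

From mathcomp Require Import all_boot.
From mathcomp Require Import all_classical all_reals all_analysis.
Set Implicit Arguments. Unset Strict Implicit. Unset Printing Implicit Defensive.
Local Open Scope classical_set_scope.

Section Cuts.
Variable E : topologicalType.

Definition stone_space : Prop :=
  [/\ compact [set: E], hausdorff_space E & totally_disconnected [set: E]].

(* A cut is an unordered partition {U, V} of E into two disjoint (nonempty)
   clopen sets; we represent it as the set of its two sides [set U; ~` U]. *)
Definition cut (C : set (set E)) : Prop :=
  exists U : set E, [/\ clopen U, U !=set0, ~` U !=set0 & C = [set U; ~` U]].

Definition has_two_points (U : set E) : Prop :=
  exists x y, [/\ U x, U y & x <> y].

Definition has_exactly_two_points (U : set E) : Prop :=
  exists x y, x <> y /\ U = [set x; y].

Definition nonperipheral (C : set (set E)) : Prop :=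
  cut C /\ forall U, C U -> has_two_points U.

Definition outermost (C : set (set E)) : Prop :=
  nonperipheral C /\ exists U, C U /\ has_exactly_two_points U.

Definition cross (C D : set (set E)) : Prop :=
  forall U V, C U -> D V -> U `&` V !=set0.

Definition compatible (C D : set (set E)) : Prop := ~ cross C D.

Definition pants_decomposition (G : set (set (set E))) : Prop :=
  [/\ countable G,
      (forall C, G C -> nonperipheral C),
      (forall C D, G C -> G D -> compatible C D),
      (forall g, nonperipheral g -> ~ G g -> exists2 C, G C & cross g C)
    & (forall g, nonperipheral g -> ~ G g ->
         finite_set [set C | G C /\ cross g C])].

Definition adjacent (G : set (set (set E))) (Ci Cj : set (set E)) : Prop :=
  [/\ G Ci, G Cj, Ci <> Cj &
      exists g, [/\ nonperipheral g, cross g Ci, cross g Cj &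
                   forall C, G C -> cross g C -> C = Ci \/ C = Cj]].

Definition valence_le2 (G : set (set (set E))) (C : set (set E)) : Prop :=
  forall a b c, adjacent G C a -> adjacent G C b -> adjacent G C c ->
    [\/ a = b, a = c | b = c].

End Cuts.

(* If gamma has a two-point side {x, y}, every other cut of a pants
   decomposition G containing gamma has a side avoiding {x, y}, and the sides
   X_i of the cuts adjacent to gamma are pairwise disjoint.  Given three of
   them, X_1 `|` X_2 bounds a non-peripheral cut which is neither in G nor
   crossed by a cut of G, contradicting maximality.

   Conversely, if both sides of gamma have at least three points, one side V
   has at least four since |E| >= 7.  Split V into clopen sets V1, V2 and its
   complement into U1, U2, with V1, V2, U2 of at least two points each, and
   enumerate the (countably many) clopen sets of E starting with V, U2 `|` V1
   and a set splitting each of V1, V2 and U2.  The non-peripheral cuts bounded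
   by atoms of the Boolean algebras generated by initial segments of the
   enumeration form a pants decomposition: atoms are nested or disjoint, and a
   clopen set is a union of atoms of bounded level.  In it gamma is adjacent
   to the cuts of V1, V2 and U2. *)

From Pilot Require Import Defs.
From HB Require Import structures.
From mathcomp Require Import all_boot.
From mathcomp Require Import all_classical all_reals all_analysis.
From mathcomp Require Import zify.
Set Implicit Arguments. Unset Strict Implicit. Unset Printing Implicit Defensive.
Local Open Scope classical_set_scope.

(* [clopen_countable] is stated for pointed spaces. *)
Definition pointed_at (T : topologicalType) (x : T) : Type := T.
HB.instance Definition _ (T : topologicalType) (x : T) :=
  Topological.copy (pointed_at x) T.
HB.instance Definition _ (T : topologicalType) (x : T) :=
  isPointed.Build (pointed_at x) x.

Lemma clopen_enumeration (T : topologicalType) (x : T) :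
  compact [set: T] -> @second_countable T ->
  exists e : nat -> set T,
    (forall n, clopen (e n)) /\ (forall K, clopen K -> exists n, e n = K).
Proof.
move=> cT sT; have /pcard_surjP [g g_surj] := @clopen_countable (pointed_at x) cT sT.
exists (fun n => if pselect (clopen (g n)) is left _ then g n else setT).
split=> [n|K cK]; first by case: pselect => // _; exact: clopenT.
by have [n _ gnK] := g_surj K cK; exists n; case: pselect => //; rewrite gnK.
Qed.

(* The library's [clopenC] takes a spurious set argument. *)
Lemma clopen_setC (T : topologicalType) (A : set T) : clopen A -> clopen (~` A).
Proof. exact: clopenC set0. Qed.

Lemma clopen_setI_open_cover (T : topologicalType) (K U V : set T) :
  clopen K -> open U -> open V -> U `&` V = set0 -> K `<=` U `|` V ->
  clopen (K `&` U).
Proof.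
move=> [oK clK] oU oV UV0 KUV; split; first exact: openI.
have -> : K `&` U = K `&` ~` V.
  apply/seteqP; split=> z [Kz Hz]; split=> //.
    by move=> Vz; have : (U `&` V) z by []; rewrite UV0.
  by case: (KUV z Kz).
by apply: closedI => //; exact: open_closedC.
Qed.

Section StoneZeroDimensional.
Variable T : topologicalType.
Hypotheses (T_compact : compact [set: T]) (T_hausdorff : hausdorff_space T)
  (T_disconnected : totally_disconnected [set: T]).

Definition quasi_component (x : T) := [set z | forall K, clopen K -> K x -> K z].

Lemma separate_disjoint_closed (A B : set T) :
  closed A -> closed B -> A `&` B = set0 ->
  exists U V, [/\ open U, open V, A `<=` U, B `<=` V & U `&` V = set0].
Proof.
move=> clA clB AB0.
have nbhsA : set_nbhs A (~` B).
  apply/set_nbhsP; exists (~` B); split=> //; first exact: closed_openC.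
  by move=> z Az Bz; have : (A `&` B) z by []; rewrite AB0.
have [W nbhsW clW] := compact_normal T_hausdorff T_compact clA nbhsA.
have [U [oU AU UW]] := (set_nbhsP _ _).1 nbhsW.
exists U, (~` closure W); split=> //.
- exact/closed_openC/closed_closure.
- by move=> z Bz clz; exact: (clW z clz).
- by apply/seteqP; split=> // z [/UW/subset_closure].
Qed.

(* Compactness: the clopen neighbourhoods of x, minus W, would otherwise form a
   proper filter base with a cluster point in the quasi-component but not in W. *)
Lemma quasi_component_clopen_sub (x : T) (W : set T) :
  quasi_component x `<=` W -> open W ->
  exists K, [/\ clopen K, K x & K `<=` W].
Proof.
move=> QW oW; apply: contrapT => noK.
pose D := [set K : set T | clopen K /\ K x].
have DW_ne K : D K -> (K `\` W) !=set0.
  move=> [cK Kx]; apply/set0P/negP => /eqP K0; apply: noK; exists K; split=> //.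
  by move=> z Kz; apply: contrapT => Wz; have : (K `\` W) z by []; rewrite K0.
pose F := filter_from D (fun K => K `\` W).
have F_filter : Filter F.
  apply: filter_from_filter; first by exists setT; split=> //; exact: clopenT.
  move=> K L [cK Kx] [cL Lx]; exists (K `&` L); first by split; [exact: clopenI|].
  by move=> z [[Kz Lz] Wz].
have [z [_]] := T_compact (filter_from_proper F_filter DW_ne) filterT.
rewrite clusterE => z_cluster.
have zDW K : D K -> (K `\` W) z.
  move=> DK; have closedKW : closed (K `\` W).
    by apply: closedI; [case: DK => -[]|exact: open_closedC].
  by move: (z_cluster (K `\` W)); rewrite -(closure_id _).1 //; apply; exists K.
have Qz : quasi_component x z by move=> K cK Kx; have [] := zDW K (conj cK Kx).
by have [_] := zDW setT (conj clopenT I); apply; exact: QW.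
Qed.

(* If B is clopen in Q, the disjoint closed sets
   Q `&` B and Q `\` B have disjoint open neighbourhoods U and V, and some
   clopen K around x lies in U `|` V; then K `&` U and K `&` V are clopen, so
   Q lies in the one containing x. *)
Lemma quasi_component_connected (x : T) : connected (quasi_component x).
Proof.
set Q := quasi_component x.
have Qx : Q x by [].
have clQ : closed Q.
  have -> : Q = \bigcap_(K in [set K : set T | clopen K /\ K x]) K.
    apply/seteqP; split=> z Qz K; first by move=> [cK Kx]; exact: Qz.
    by move=> cK Kx; exact: Qz.
  by apply: closed_bigI => K [[]].
move=> B B0 [Op oOp BOp] [Cl cCl BCl].
have BOpCl z : Q z -> (Op z <-> Cl z).
  move=> Qz; split=> h.
    have : (Q `&` Cl) z by rewrite -BCl BOp.
    by case.
  have : (Q `&` Op) z by rewrite -BOp BCl.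
  by case.
have [U [V [oU oV ClU OpV UV0]]] :
    exists U V, [/\ open U, open V, Q `&` Cl `<=` U, Q `&` ~` Op `<=` V
                  & U `&` V = set0].
  apply: separate_disjoint_closed; first exact: closedI.
    by apply: closedI => //; exact: open_closedC.
  by apply/seteqP; split=> // z [[Qz Clz] [_]]; apply; exact: (BOpCl z Qz).2.
have QUV : Q `<=` U `|` V.
  move=> z Qz; have [Opz|Opz] := pselect (Op z); last by right; exact: OpV.
  by left; apply: ClU; split=> //; exact: (BOpCl z Qz).1.
have [K [cK Kx KUV]] := quasi_component_clopen_sub QUV (openU oU oV).
have UVz z : U z -> ~ V z by move=> Uz Vz; have : (U `&` V) z by []; rewrite UV0.
have cKU : clopen (K `&` U) := clopen_setI_open_cover cK oU oV UV0 KUV.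
have cKV : clopen (K `&` V).
  by apply: (clopen_setI_open_cover cK oV oU); rewrite 1?setIC // setUC.
have [Opx|Opx] := pselect (Op x).
  have Ux : U x by apply: ClU; split=> //; exact: (BOpCl x Qx).1.
  apply/seteqP; split=> [z|z Qz]; first by rewrite BOp => -[].
  rewrite BOp; split=> //; apply: contrapT => Opz.
  have [_ Uz] : (K `&` U) z by apply: Qz.
  by apply: (UVz z Uz); apply: OpV.
have [b Bb] := B0; have [Qb Opb] : Q b /\ Op b by move: Bb; rewrite BOp.
have [_ Vb] : (K `&` V) b by apply: Qb => //; split=> //; apply: OpV.
by exfalso; apply: (UVz b _ Vb); apply: ClU; split=> //; exact: (BOpCl b Qb).1.
Qed.

Lemma stone_zero_dimensional : zero_dimensional T.
Proof.
move=> x y /eqP xy; apply: contrapT => noK.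
have Qy : quasi_component x y.
  by move=> K cK Kx; apply: contrapT => Ky; apply: noK; exists K.
have : connected_component [set: T] x y.
  by exists (quasi_component x) => //; split=> //; exact: quasi_component_connected.
by rewrite T_disconnected // => /esym.
Qed.

End StoneZeroDimensional.

Lemma zero_dimensional_separate (T : topologicalType) (p1 p2 q1 q2 : T) :
  zero_dimensional T -> p1 <> q1 -> p1 <> q2 -> p2 <> q1 -> p2 <> q2 ->
  exists K, [/\ clopen K, K p1, K p2, ~ K q1 & ~ K q2].
Proof.
move=> zdT /eqP/zdT [K11 [c11 K11p K11q]] /eqP/zdT [K12 [c12 K12p K12q]].
move=> /eqP/zdT [K21 [c21 K21p K21q]] /eqP/zdT [K22 [c22 K22p K22q]].
exists ((K11 `&` K12) `|` (K21 `&` K22)); split.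
- by apply: clopenU; apply: clopenI.
- by left.
- by right.
- by case=> -[] // /K21q.
- by case=> -[] // _ /K22q.
Qed.

Lemma in_notin_neq (T : Type) (A : set T) (p q : T) : A p -> ~ A q -> p <> q.
Proof. by move=> Ap Aq pq; apply: Aq; rewrite -pq. Qed.

Lemma notin_in_neq (T : Type) (A : set T) (p q : T) : ~ A p -> A q -> p <> q.
Proof. by move=> Ap Aq pq; apply: Ap; rewrite pq. Qed.

Section CutCombinatorics.
Variable E : topologicalType.
Implicit Types (A B S W : set E) (C D g : set (set E)).

Definition cut_of A : set (set E) := [set A; ~` A].

Lemma cut_ofC A : cut_of (~` A) = cut_of A.
Proof. by rewrite /cut_of setCK setUC. Qed.

Lemma cut_ofE C A : Defs.cut C -> C A -> C = cut_of A.
Proof. by move=> [U [_ _ _ ->]] [->|->]; rewrite ?cut_ofC. Qed.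

Lemma cut_side_clopen C A : Defs.cut C -> C A -> clopen A.
Proof. by move=> [U [cU _ _ ->]] [->|->] //; exact: clopen_setC. Qed.

Lemma eq_cut_of A B : cut_of A = cut_of B -> A = B \/ A = ~` B.
Proof. by move=> AB; have : cut_of B A by rewrite -AB; left. Qed.

Lemma cut_of_neq A B p q :
  ~ (A p <-> B p) -> (A q <-> B q) -> cut_of A <> cut_of B.
Proof.
move=> ABp ABq /eq_cut_of [AB|AB]; first by apply: ABp; rewrite AB.
by move: ABq; rewrite AB /setC /=; tauto.
Qed.

Lemma nonperipheral_cut_of S p q r s : clopen S ->
  S p -> S q -> p <> q -> ~ S r -> ~ S s -> r <> s -> nonperipheral (cut_of S).
Proof.
move=> cS Sp Sq pq Sr Ss rs; split; first by exists S; split=> //; [exists p|exists r].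
by move=> U [->|->]; [exists p, q|exists r, s].
Qed.

Lemma crossC C D : cross C D -> cross D C.
Proof. by move=> CD A B DA CB; rewrite setIC; exact: CD. Qed.

Lemma disjoint_sides_not_cross C D A B :
  C A -> D B -> A `&` B = set0 -> ~ cross C D.
Proof. by move=> CA DB AB0 /(_ A B CA DB); rewrite AB0 => /set0P; rewrite eqxx. Qed.

Lemma not_cross_disjoint_sides C D :
  ~ cross C D -> exists A B, [/\ C A, D B & A `&` B = set0].
Proof.
move=> CD; apply: contrapT => noAB; apply: CD => A B CA DB.
by apply/set0P/eqP => AB0; apply: noAB; exists A, B.
Qed.

Lemma compatible_cut_of A B : compatible (cut_of A) (cut_of B) <->
  [\/ A `&` B = set0, A `<=` B, B `<=` A | ~` A `&` ~` B = set0].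
Proof.
split=> [/not_cross_disjoint_sides [S [T [[]-> [] -> ST0]]]|].
- exact: Or41.
- apply: Or42 => z Az; apply: contrapT => Bz.
  by have : (A `&` ~` B) z by []; rewrite ST0.
- apply: Or43 => z Bz; apply: contrapT => Az.
  by have : (~` A `&` B) z by []; rewrite ST0.
- exact: Or44.
case=> [AB0|AB|BA|AB0].
- by apply: (disjoint_sides_not_cross (A := A) (B := B)) => //; left.
- apply: (disjoint_sides_not_cross (A := A) (B := ~` B)); [left|right|] => //.
  by apply/seteqP; split=> // z [/AB].
- apply: (disjoint_sides_not_cross (A := ~` A) (B := B)); [right|left|] => //.
  by apply/seteqP; split=> // z [Az /BA].
- by apply: (disjoint_sides_not_cross (A := ~` A) (B := ~` B)) => //; right.
Qed.

Lemma cross_cut_of W S p1 p2 p3 p4 :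
  W p1 -> S p1 -> W p2 -> ~ S p2 -> ~ W p3 -> S p3 -> ~ W p4 -> ~ S p4 ->
  cross (cut_of W) (cut_of S).
Proof.
by move=> *; move=> A B [->|->] [->|->]; [exists p1|exists p2|exists p3|exists p4].
Qed.

Lemma has_two_points_sub_pair A (x y : E) :
  A `<=` [set x; y] -> has_two_points A -> A = [set x; y].
Proof.
move=> Axy [p [q [Ap Aq pq]]]; apply/seteqP; split=> // r.
have [] := Axy p Ap; have [] := Axy q Aq; move=> /= eq ep; subst p q;
  by [case: pq | case=> ->].
Qed.

Lemma fewer_than_two_points_sub A U (p : E) :
  A p -> ~ has_two_points A -> A `<=` U \/ A `<=` ~` U.
Proof.
move=> Ap A1; have Ap_eq q : A q -> q = p.
  by move=> Aq; apply: contrapT => qp; apply: A1; exists q, p.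
by have [Up|Up] := pselect (U p); [left|right] => q /Ap_eq ->.
Qed.

End CutCombinatorics.

Section AtomCuts.
Variables (E : topologicalType) (d : nat -> set E).
Hypotheses (d_clopen : forall i, clopen (d i))
  (d_surj : forall K, clopen K -> exists i, d i = K).
Implicit Types (S U W : set E) (C g : set (set E)).

(* [atom n p] is the atom containing [p] of the Boolean algebra generated by
   [d 0], ..., [d n.-1]; [saturated n S] says that [S] is a union of such atoms. *)
Definition atom n (p : E) := [set q | forall i, (i < n)%N -> (d i q <-> d i p)].

Definition saturated n S := forall p q, atom n p q -> (S q <-> S p).

Definition atom_cuts :=
  [set C | nonperipheral C /\ exists n p, C = cut_of (atom n p)].

Lemma atom_refl n p : atom n p p.
Proof. by []. Qed.

Lemma atom_sym n p q : atom n p q -> atom n q p.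
Proof. by move=> pq i /pq [? ?]; split. Qed.

Lemma atomS n p : atom n.+1 p = atom n p `&` [set q | d n q <-> d n p].
Proof.
apply/seteqP; split=> q; first by move=> pq; split=> [i /ltnW|]; apply: pq.
by move=> [pq dnq] i; rewrite ltnS leq_eqVlt => /orP[/eqP->|/pq].
Qed.

Lemma atom_clopen n p : clopen (atom n p).
Proof.
elim: n => [|n IHn].
  by rewrite (_ : atom 0 p = setT); [exact: clopenT|apply/seteqP; split].
rewrite atomS; apply: clopenI => //.
have [dnp|dnp] := pselect (d n p).
  by rewrite (_ : [set q | _] = d n) //; apply/seteqP; split=> q /=; tauto.
rewrite (_ : [set q | _] = ~` d n); first exact: clopen_setC.
by apply/seteqP; split=> q /=; tauto.
Qed.

Lemma saturated_atom n p : saturated n (atom n p).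
Proof. by move=> r q rq; split=> h i /[dup] /h + /rq; tauto. Qed.

Lemma saturated_d k : saturated k.+1 (d k).
Proof. by move=> p q /(_ k (ltnSn k)). Qed.

Lemma saturatedC n S : saturated n S -> saturated n (~` S).
Proof. by move=> satS p q /satS; rewrite /setC /=; tauto. Qed.

Lemma saturated_le k n S : (k <= n)%N -> saturated k S -> saturated n S.
Proof. by move=> kn satS p q pq; apply: satS => i ik; apply/pq/(leq_trans ik). Qed.

Lemma saturated3 W (F : Prop -> Prop -> Prop -> Prop) :
  (forall P P' Q Q' R R', (P <-> P') -> (Q <-> Q') -> (R <-> R') ->
     (F P Q R <-> F P' Q' R')) ->
  (forall q, W q <-> F (d 0 q) (d 1 q) (d 2 q)) -> saturated 3 W.
Proof. by move=> F_morph WF p q pq; rewrite !WF; apply: F_morph; apply: pq. Qed.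

Lemma saturated_not_cross_atom n W p :
  saturated n W -> ~ cross (cut_of W) (cut_of (atom n p)).
Proof.
move=> satW; apply/compatible_cut_of; have [Wp|Wp] := pselect (W p).
  by apply: Or43 => q /satW [_]; apply.
by apply: Or41; apply/disjoints_subset => q Wq /satW Wqp; exact/Wp/Wqp.
Qed.

Lemma atom_cuts_compatible C D : atom_cuts C -> atom_cuts D -> compatible C D.
Proof.
have nested n m p q : (n <= m)%N -> ~ cross (cut_of (atom n p)) (cut_of (atom m q)).
  move=> nm; apply: saturated_not_cross_atom.
  exact: saturated_le nm (@saturated_atom n p).
move=> [_ [n [p ->]]] [_ [m [q ->]]]; have [nm|/ltnW mn] := leqP n m.
  exact: nested.
by move=> /crossC; exact: nested.
Qed.

(* Refining an atom of level [m] by [d m] splits it into at most two atoms. *)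
Lemma saturated_sub_atom m S p s t : saturated m.+1 S -> S `<=` atom m p ->
  S s -> atom m p t -> ~ S t -> S = atom m.+1 s.
Proof.
move=> satS Sp Ss pt St; apply/seteqP; split=> [r Sr|r /satS -> //].
have sr : atom m s r.
  by move=> i im; have := Sp r Sr i im; have := Sp s Ss i im; tauto.
rewrite atomS; split=> //; apply: contrapT => dmr.
have st : atom m s t.
  by move=> i im; have := pt i im; have := Sp s Ss i im; tauto.
have [dmt|dmt] := pselect (d m t <-> d m s).
  have st' : atom m.+1 s t by rewrite atomS.
  exact/St/(satS s t st').
have rt : atom m.+1 r t.
  rewrite atomS; split.
    by move=> i im; have := st i im; have := sr i im; tauto.
  move: dmr dmt => /=.
  by have := pselect (d m r); have := pselect (d m s); have := pselect (d m t); tauto.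
exact/St/(satS r t rt).
Qed.

Lemma not_cross_atom_cuts_nested U n p :
  (forall C, atom_cuts C -> ~ cross (cut_of U) C) ->
  [\/ atom n p `<=` U, atom n p `<=` ~` U, U `<=` atom n p | ~` U `<=` atom n p].
Proof.
move=> noncross; set A := atom n p.
have [A2|A1] := pselect (has_two_points A); last first.
  by case: (fewer_than_two_points_sub U (@atom_refl n p) A1); [apply: Or41|apply: Or42].
have [cA2|cA1] := pselect (has_two_points (~` A)); last first.
  have [[r Ar]|noA] := pselect (exists r, ~ A r); last first.
    by apply: Or43 => q _; apply: contrapT => Aq; apply: noA; exists q.
  case: (fewer_than_two_points_sub U Ar cA1) => cAU.
    by apply: Or44 => q Uq; apply: contrapT => /cAU.
  by apply: Or43 => q Uq; apply: contrapT => /cAU /(_ Uq).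
have atomA : atom_cuts (cut_of A).
  split; last by exists n, p.
  split; last by move=> S [->|->].
  exists A; split=> //; first exact: atom_clopen.
    by exists p.
  by have [q [r [Aq _ _]]] := cA2; exists q.
case/compatible_cut_of: (noncross _ atomA) => [UA0|UA|AU|UA0].
- by apply: Or42; apply/disjoints_subset; rewrite setIC.
- exact: Or43.
- exact: Or41.
- by apply: Or44; move/disjoints_subset: UA0; rewrite setCK.
Qed.

Lemma clopen_split_atom U : clopen U -> U !=set0 -> ~` U !=set0 ->
  exists m s t, [/\ saturated m.+1 U, atom m s t, U s & ~ U t].
Proof.
move=> cU [u Uu] [v Uv]; have [k dk] := d_surj cU.
have ex_sat : exists m, `[< saturated m U >].
  by exists k.+1; apply/asboolP; rewrite -dk; exact: saturated_d.
case: (ex_minnP ex_sat) => -[|m] /asboolP satU min_m.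
  by exfalso; apply: Uv; apply/(satU u v).
have unsat : ~ saturated m U.
  by move=> /asboolP /min_m; rewrite ltnn.
have [p [q [pq Upq]]] : exists p q, atom m p q /\ ~ (U q <-> U p).
  apply: contrapT => nopq; apply: unsat => p q pq.
  by apply: contrapT => Upq; apply: nopq; exists p, q.
have [Uq|Uq] := pselect (U q).
  by exists m, q, p; split=> //; [exact: atom_sym|tauto].
by exists m, p, q; split=> //; apply: contrapT => Up; apply: Upq; tauto.
Qed.

Lemma atom_cuts_maximal g :
  nonperipheral g -> ~ atom_cuts g -> exists2 C, atom_cuts C & cross g C.
Proof.
move=> npg gN; apply: contrapT => noC.
have [U [cU U0 cU0 gU]] := npg.1; have {}gU : g = cut_of U by [].
have noncross C : atom_cuts C -> ~ cross (cut_of U) C.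
  by rewrite -gU => CN gC; apply: noC; exists C.
have [m [s [t [satU st Us Ut]]]] := clopen_split_atom cU U0 cU0.
case: (not_cross_atom_cuts_nested m s noncross) => sub.
- exact/Ut/sub.
- exact: sub Us.
- apply: gN; split=> //; exists m.+1, s.
  by rewrite gU (saturated_sub_atom satU sub Us st Ut).
- apply: gN; split=> //; exists m.+1, t; rewrite gU -cut_ofC.
  by rewrite (saturated_sub_atom (saturatedC satU) sub Ut (@atom_refl m s)).
Qed.

Definition atom_of_code n (b : seq bool) :=
  [set q | forall i, (i < n)%N -> (d i q <-> nth false b i)].

Lemma atom_codeE n k p : (n <= k)%N ->
  atom n p = atom_of_code n (mkseq (fun i => `[< d i p >]) k).
Proof.
move=> nk; apply/seteqP; split=> q qp i ni; have := qp i ni;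
  by rewrite nth_mkseq ?(leq_trans ni nk) // asboolE.
Qed.

Lemma atom_cuts_countable : countable atom_cuts.
Proof.
pose F (x : nat * seq bool) := cut_of (atom_of_code x.1 x.2).
have sub : atom_cuts `<=` F @` setT.
  by move=> C [_ [n [p ->]]]; exists (n, mkseq (fun i => `[< d i p >]) n);
    rewrite // /F (atom_codeE p (leqnn n)).
apply: (sub_countable (subset_card_le sub)).
by apply: (sub_countable (card_image_le _ _)); exact: countableP.
Qed.

Lemma atom_cuts_crossing_finite g :
  nonperipheral g -> finite_set [set C | atom_cuts C /\ cross g C].
Proof.
move=> npg; have [U [cU _ _ gU]] := npg.1; have [k dk] := d_surj cU.
pose F (x : 'I_k.+1 * k.-tuple bool) := cut_of (atom_of_code x.1 x.2).
apply: (sub_finite_set _ (finite_image F (@finite_finset _ setT))).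
move=> C [[_ [n [p ->]]] gC]; have nk : (n <= k)%N.
  rewrite leqNgt; apply/negP => kn; move: gC; rewrite gU.
  by apply/saturated_not_cross_atom/(saturated_le kn); rewrite -dk; exact: saturated_d.
exists (inord n, [tuple of mkseq (fun i => `[< d i p >]) k]) => //.
by rewrite /F /= inordK ?ltnS // -(atom_codeE p nk).
Qed.

Lemma atom_cuts_pants : pants_decomposition atom_cuts.
Proof.
split.
- exact: atom_cuts_countable.
- by move=> C [].
- exact: atom_cuts_compatible.
- exact: atom_cuts_maximal.
- by move=> g npg _; exact: atom_cuts_crossing_finite.
Qed.

End AtomCuts.

Section OutermostValence.
Variables (E : topologicalType) (G : set (set (set E))) (x y : E).
Hypotheses (xy : x <> y)
  (G_np : forall C, G C -> nonperipheral C)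
  (G_compat : forall C D, G C -> G D -> compatible C D)
  (G_max : forall g, nonperipheral g -> ~ G g -> exists2 C, G C & cross g C).
Let U := [set x; y].
Let gamma := cut_of U.
Hypothesis G_gamma : G gamma.
Implicit Types (C D : set (set E)) (X Y Z : set E).

Let Ux : U x. Proof. by left. Qed.
Let Uy : U y. Proof. by right. Qed.

Lemma pants_cut_off_pair D : G D -> D = gamma \/
  exists Z, [/\ D = cut_of Z, clopen Z, Z `<=` ~` U & has_two_points Z].
Proof.
move=> GD; have [cutD D2] := G_np GD.
have [S [Z [gS DZ SZ0]]] := not_cross_disjoint_sides (G_compat G_gamma GD).
have SZ z : S z -> Z z -> False by move=> Sz Zz; have : (S `&` Z) z by []; rewrite SZ0.
rewrite (cut_ofE cutD DZ); case: gS => -> in SZ.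
  right; exists Z; split=> //; [exact: cut_side_clopen cutD DZ| |exact: D2].
  by move=> z Zz Uz; exact: SZ Uz Zz.
left; congr cut_of; apply: has_two_points_sub_pair (D2 Z DZ) => z Zz.
by apply: contrapT => Uz; exact: SZ Uz Zz.
Qed.

Definition adjacent_side C X :=
  [/\ [/\ G C, gamma <> C & C = cut_of X], clopen X, X `<=` ~` U, has_two_points X &
    exists g, [/\ cross g gamma, cross g C &
      forall C', G C' -> cross g C' -> C' = gamma \/ C' = C]].

Lemma adjacent_sideP C : Defs.adjacent G gamma C -> exists X, adjacent_side C X.
Proof.
move=> [_ GC gammaC [g [_ g_gamma g_C g_only]]].
have [/esym //|[X [CX cX XU X2]]] := pants_cut_off_pair GC.
by exists X; split=> //; exists g.
Qed.

(* The cut crossing only gamma and C also crosses the cut of Y. *)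
Lemma adjacent_side_above C X Y : adjacent_side C X -> X `<=` Y -> Y `<=` ~` U ->
  G (cut_of Y) -> cut_of Y = gamma \/ cut_of Y = C.
Proof.
move=> [[_ _ CX] _ _ _ [g [g_gamma g_C g_only]]] XY YU GY.
apply: g_only => // S T gS [->|->].
  have := g_C S X gS; rewrite CX => /(_ (or_introl erefl)).
  by move=> [z [Sz /XY Yz]]; exists z.
have := g_gamma S U gS (or_introl erefl).
by move=> [z [Sz Uz]]; exists z; split=> // /YU; exact.
Qed.

Lemma adjacent_sides_disjoint C1 X1 C2 X2 :
  adjacent_side C1 X1 -> adjacent_side C2 X2 -> C1 <> C2 -> X1 `&` X2 = set0.
Proof.
move=> a1 a2 C12; have [[GC1 gC1 C1X] _ X1U _ _] := a1.
have [[GC2 gC2 C2X] _ X2U _ _] := a2.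
have := G_compat GC1 GC2; rewrite C1X C2X => /compatible_cut_of[//|X12|X21|X12c].
- have GX2 : G (cut_of X2) by rewrite -C2X.
  by case: (adjacent_side_above a1 X12 X2U GX2); rewrite -C2X => /esym; [move/gC2|move/C12].
- have GX1 : G (cut_of X1) by rewrite -C1X.
  by case: (adjacent_side_above a2 X21 X1U GX1); rewrite -C1X; [move/esym/gC1|move/C12].
- have : (~` X1 `&` ~` X2) x by split=> [/X1U|/X2U]; exact.
  by rewrite X12c.
Qed.

Lemma pants_side_vs_adjacent_side D Z C X : G D -> D = cut_of Z ->
  Z `<=` ~` U -> adjacent_side C X ->
  [\/ Z `&` X = set0, Z `<=` X, D = gamma | D = C].
Proof.
move=> GD DZ ZU a; have [[GC _ CX] _ XU _ _] := a.
have := G_compat GD GC; rewrite DZ CX => /compatible_cut_of[ZX0|ZX|XZ|ZXc].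
- exact: Or41.
- exact: Or42.
- by case: (adjacent_side_above a XZ ZU); rewrite -DZ // => ->; [apply: Or43|apply: Or44].
- have : (~` Z `&` ~` X) x by split=> [/ZU|/XU]; exact.
  by rewrite ZXc.
Qed.

Lemma union_adjacent_sides_nonperipheral C1 X1 C2 X2 :
  adjacent_side C1 X1 -> adjacent_side C2 X2 -> nonperipheral (cut_of (X1 `|` X2)).
Proof.
move=> [_ cX1 X1U [p [q [X1p X1q pq]]] _] [_ cX2 X2U _ _].
apply: (nonperipheral_cut_of (clopenU cX1 cX2) (p := p) (q := q) (r := x) (s := y)) => //.
- by left.
- by left.
- by case=> [/X1U|/X2U]; exact.
- by case=> [/X1U|/X2U]; exact.
Qed.

Lemma union_adjacent_sides_uncrossed C1 X1 C2 X2 D :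
  adjacent_side C1 X1 -> adjacent_side C2 X2 -> G D ->
  ~ cross (cut_of (X1 `|` X2)) D.
Proof.
move=> a1 a2 GD; set Y := X1 `|` X2.
have [[_ _ C1X] _ X1U _ _] := a1; have [[_ _ C2X] _ X2U _ _] := a2.
have YU0 : Y `&` U = set0 by apply/disjoints_subset => z [/X1U|/X2U].
suff [Z [DZ [YZ0|ZY]]] : exists Z, D = cut_of Z /\ (Y `&` Z = set0 \/ Z `<=` Y).
- by rewrite DZ; apply/compatible_cut_of/Or41.
- by rewrite DZ; apply/compatible_cut_of/Or43.
have [DU|[Z [DZ _ ZU _]]] := pants_cut_off_pair GD; first by exists U; split; [|left].
case: (pants_side_vs_adjacent_side GD DZ ZU a1) => [ZX1|ZX1|DU|DX1].
- case: (pants_side_vs_adjacent_side GD DZ ZU a2) => [ZX2|ZX2|DU|DX2].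
  + exists Z; split=> //; left; apply/disjoints_subset => z [X1z|X2z] Zz.
      by have : (Z `&` X1) z by []; rewrite ZX1.
    by have : (Z `&` X2) z by []; rewrite ZX2.
  + by exists Z; split=> //; right=> z /ZX2; right.
  + by exists U; split; [|left].
  + by exists X2; split; [rewrite DX2|right=> z; right].
- by exists Z; split=> //; right=> z /ZX1; left.
- by exists U; split; [|left].
- by exists X1; split; [rewrite DX1|right=> z; left].
Qed.

Lemma union_adjacent_sides_notin C1 X1 C2 X2 C3 X3 :
  adjacent_side C1 X1 -> adjacent_side C2 X2 -> adjacent_side C3 X3 ->
  X1 `&` X2 = set0 -> X1 `&` X3 = set0 -> X2 `&` X3 = set0 ->
  ~ G (cut_of (X1 `|` X2)).
Proof.
move=> a1 a2 a3 /disjoints_subset X12 /disjoints_subset X13 /disjoints_subset X23.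
set Y := X1 `|` X2 => GY.
have [[_ _ C1X] _ X1U [p [_ [X1p _ _]]] _] := a1.
have [_ _ X2U [p2 [_ [X2p2 _ _]]] _] := a2.
have [_ _ X3U [p3 [_ [X3p3 _ _]]] _] := a3.
have YU : Y `<=` ~` U by move=> z [/X1U|/X2U].
case: (adjacent_side_above a1 (@subsetUl _ X1 X2) YU GY); last rewrite C1X;
  move=> /eq_cut_of [YV|YV].
- by apply: (X1U p X1p); rewrite -YV; left.
- have : Y p3 by rewrite /Y YV; exact: X3U.
  by case=> [/X13|/X23] /(_ X3p3).
- by apply: (X12 p2) => //; rewrite -YV; right.
- have : Y x by rewrite /Y YV => /X1U /(_ Ux).
  by move=> /YU /(_ Ux).
Qed.

Lemma outermost_valence_le2 : valence_le2 G gamma.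
Proof.
move=> C1 C2 C3 /adjacent_sideP [X1 a1] /adjacent_sideP [X2 a2] /adjacent_sideP [X3 a3].
have [|C12] := pselect (C1 = C2); first exact: Or31.
have [|C13] := pselect (C1 = C3); first exact: Or32.
have [|C23] := pselect (C2 = C3); first exact: Or33.
have Y_np := union_adjacent_sides_nonperipheral a1 a2.
have Y_notin := union_adjacent_sides_notin a1 a2 a3 (adjacent_sides_disjoint a1 a2 C12)
  (adjacent_sides_disjoint a1 a3 C13) (adjacent_sides_disjoint a2 a3 C23).
have [D GD YD] := G_max Y_np Y_notin.
by case: (union_adjacent_sides_uncrossed a1 a2 GD).
Qed.

End OutermostValence.

Section ThreeAdjacentCuts.
Variables (E : topologicalType) (e : nat -> set E).
Hypotheses (e_clopen : forall n, clopen (e n))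
  (e_surj : forall K, clopen K -> exists n, e n = K).
Variables (V K1 K2 Kab Kcd Kxy : set E) (a b c d x y z : E).
Hypotheses (cV : clopen V) (cK1 : clopen K1) (cK2 : clopen K2)
  (cKab : clopen Kab) (cKcd : clopen Kcd) (cKxy : clopen Kxy).
Hypotheses (Va : V a) (Vb : V b) (Vc : V c) (Vd : V d)
  (Vx : ~ V x) (Vy : ~ V y) (Vz : ~ V z)
  (K1a : K1 a) (K1b : K1 b) (K1c : ~ K1 c) (K1d : ~ K1 d)
  (K2x : K2 x) (K2y : K2 y) (K2z : ~ K2 z)
  (Kab_a : Kab a) (Kab_b : ~ Kab b) (Kcd_c : Kcd c) (Kcd_d : ~ Kcd d)
  (Kxy_x : Kxy x) (Kxy_y : ~ Kxy y).

Let V1 := V `&` K1.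
Let V2 := V `\` K1.
Let U2 := ~` V `&` K2.
Let U1 := ~` V `\` K2.
Let V1a := V1 `&` Kab.
Let V2a := V2 `&` Kcd.
Let U2a := U2 `&` Kxy.

Local Ltac sets := rewrite /V1a /V2a /U2a /V1 /V2 /U1 /U2 /=; tauto.
Local Ltac clopen_sets := rewrite /V1a /V2a /U2a /V1 /V2 /U1 /U2 ?setDE;
  repeat first [assumption|apply: clopenU|apply: clopenI|apply: clopen_setC].

Definition pants_enum n := match n with
  | 0 => V | 1 => U2 `|` V1 | 2 => U2a `|` V1a `|` V2a | n.+3 => e n end.

Lemma pants_enum_clopen n : clopen (pants_enum n).
Proof. by case: n => [|[|[|n]]] //=; clopen_sets. Qed.

Lemma pants_enum_surj K : clopen K -> exists n, pants_enum n = K.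
Proof. by move=> /e_surj [n en]; exists n.+3. Qed.

Let G := atom_cuts pants_enum.
Let gamma := cut_of V.

Let ab : a <> b. Proof. exact: in_notin_neq Kab_a Kab_b. Qed.
Let cd : c <> d. Proof. exact: in_notin_neq Kcd_c Kcd_d. Qed.
Let xy : x <> y. Proof. exact: in_notin_neq Kxy_x Kxy_y. Qed.
Let xa : x <> a. Proof. exact: notin_in_neq Vx Va. Qed.
Let za : z <> a. Proof. exact: notin_in_neq Vz Va. Qed.
Let zc : z <> c. Proof. exact: notin_in_neq Vz Vc. Qed.
Let zd : z <> d. Proof. exact: notin_in_neq Vz Vd. Qed.

Lemma atom1E p : atom pants_enum 1 p = [set q | V q <-> V p].
Proof.
apply/seteqP; split=> q /=; first by move=> h; exact: (h 0%N).
by move=> Vqp [|//] _.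
Qed.

Lemma atom2E p : atom pants_enum 2 p =
  [set q | (V q <-> V p) /\ ((U2 `|` V1) q <-> (U2 `|` V1) p)].
Proof.
apply/seteqP; split=> q /=; first by move=> h; split; [exact: (h 0%N)|exact: (h 1%N)].
by case=> h0 h1 [|[|//]] _.
Qed.

Lemma atom2_cases p : [\/ atom pants_enum 2 p = V1, atom pants_enum 2 p = V2,
  atom pants_enum 2 p = U2 | atom pants_enum 2 p = U1].
Proof.
rewrite atom2E; have [Vp|Vp] := pselect (V p).
  have [K1p|K1p] := pselect (K1 p); [apply: Or41|apply: Or42];
    by apply/seteqP; split=> q; sets.
have [K2p|K2p] := pselect (K2 p); [apply: Or43|apply: Or44];
  by apply/seteqP; split=> q; sets.
Qed.

Lemma pants_gamma : G gamma.
Proof.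
split; first exact: nonperipheral_cut_of cV Va Vb ab Vx Vy xy.
by exists 1%N, a; rewrite atom1E; congr cut_of; apply/seteqP; split=> q /=; tauto.
Qed.

Lemma pants_V1 : G (cut_of V1).
Proof.
split; first by apply: (nonperipheral_cut_of _ _ _ ab _ _ cd); [clopen_sets|sets..].
by exists 2%N, a; rewrite atom2E; congr cut_of; apply/seteqP; split=> q; sets.
Qed.

Lemma pants_V2 : G (cut_of V2).
Proof.
split; first by apply: (nonperipheral_cut_of _ _ _ cd _ _ ab); [clopen_sets|sets..].
by exists 2%N, c; rewrite atom2E; congr cut_of; apply/seteqP; split=> q; sets.
Qed.

Lemma pants_U2 : G (cut_of U2).
Proof.
split; first by apply: (nonperipheral_cut_of _ _ _ xy _ _ za); [clopen_sets|sets..].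
by exists 2%N, x; rewrite atom2E; congr cut_of; apply/seteqP; split=> q; sets.
Qed.

(* The atom cuts of level at most 2 are gamma and the cuts of V1, V2, U2, U1;
   a set saturated at level 3 crosses no atom cut of higher level. *)
Lemma adjacent_through W C : nonperipheral (cut_of W) ->
  saturated pants_enum 3 W -> cross (cut_of W) gamma -> cross (cut_of W) C ->
  G C -> gamma <> C ->
  (forall S, [\/ S = V1, S = V2, S = U2 | S = U1] ->
     cross (cut_of W) (cut_of S) -> cut_of S = C) ->
  Defs.adjacent G gamma C.
Proof.
move=> npW satW Wg WC GC gC W_level2; split=> //; first exact: pants_gamma.
exists (cut_of W); split=> // _ [_ [n [p ->]]].
case: n => [|[|[|n]]] WA.
- have [q [_ Aq]] := WA W (~` atom pants_enum 0 p) (or_introl erefl) (or_intror erefl).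
  by case: Aq => i; rewrite ltn0.
- left; rewrite atom1E /gamma; have [Vp|Vp] := pselect (V p); last rewrite -(cut_ofC V);
    by congr cut_of; apply/seteqP; split=> q /=; tauto.
- by right; apply: W_level2 WA; exact: atom2_cases.
- by case: (saturated_not_cross_atom (saturated_le _ satW) WA).
Qed.

Lemma adjacent_V1 : Defs.adjacent G gamma (cut_of V1).
Proof.
apply: (@adjacent_through (U2 `|` V1a)).
- by apply: (nonperipheral_cut_of _ _ _ xy _ _ zc); [clopen_sets|sets..].
- apply: (saturated3 (F := fun A B C => B /\ (~ A \/ C))); first by move=> *; simpl; tauto.
  by move=> q /=; sets.
- by apply: (@cross_cut_of _ _ _ a x b z); sets.
- by apply: (@cross_cut_of _ _ _ a x b z); sets.
- exact: pants_V1.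
- by apply: (cut_of_neq (p := c) (q := a)); sets.
- move=> S [->|->|->|->] // WS; exfalso; move: WS; apply/compatible_cut_of.
  + by apply: Or41; apply/disjoints_subset => q; sets.
  + by apply: Or43 => q; sets.
  + by apply: Or41; apply/disjoints_subset => q; sets.
Qed.

Lemma adjacent_V2 : Defs.adjacent G gamma (cut_of V2).
Proof.
apply: (@adjacent_through (U2 `|` V2a)).
- by apply: (nonperipheral_cut_of _ _ _ xy _ _ zd); [clopen_sets|sets..].
- apply: (saturated3 (F := fun A B C => (B /\ ~ A) \/ (A /\ ~ B /\ C)));
    first by move=> *; simpl; tauto.
  by move=> q /=; sets.
- by apply: (@cross_cut_of _ _ _ c x d z); sets.
- by apply: (@cross_cut_of _ _ _ c x d z); sets.
- exact: pants_V2.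
- by apply: (cut_of_neq (p := a) (q := c)); sets.
- move=> S [->|->|->|->] // WS; exfalso; move: WS; apply/compatible_cut_of.
  + by apply: Or41; apply/disjoints_subset => q; sets.
  + by apply: Or43 => q; sets.
  + by apply: Or41; apply/disjoints_subset => q; sets.
Qed.

Lemma adjacent_U2 : Defs.adjacent G gamma (cut_of U2).
Proof.
apply: (@adjacent_through (U2a `|` V1)).
- by apply: (nonperipheral_cut_of _ _ _ xa _ _ zc); [clopen_sets|sets..].
- apply: (saturated3 (F := fun A B C => (A /\ B) \/ (~ A /\ C)));
    first by move=> *; simpl; tauto.
  by move=> q /=; sets.
- by apply: (@cross_cut_of _ _ _ a x c z); sets.
- by apply: (@cross_cut_of _ _ _ x a y z); sets.
- exact: pants_U2.
- by apply: (cut_of_neq (p := a) (q := z)); sets.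
- move=> S [->|->|->|->] // WS; exfalso; move: WS; apply/compatible_cut_of.
  + by apply: Or43 => q; sets.
  + by apply: Or41; apply/disjoints_subset => q; sets.
  + by apply: Or41; apply/disjoints_subset => q; sets.
Qed.

Lemma pants_with_three_adjacent :
  exists G, [/\ pants_decomposition G, G (cut_of V) & ~ valence_le2 G (cut_of V)].
Proof.
exists G; split; first exact: atom_cuts_pants pants_enum_clopen pants_enum_surj.
  exact: pants_gamma.
move=> /(_ _ _ _ adjacent_V1 adjacent_V2 adjacent_U2) [].
- by apply: (cut_of_neq (p := a) (q := x)); sets.
- by apply: (cut_of_neq (p := a) (q := z)); sets.
- by apply: (cut_of_neq (p := c) (q := z)); sets.
Qed.

End ThreeAdjacentCuts.

Lemma seven_points_four_on_a_side (T : Type) (f : 'I_7 -> T) (A : set T) :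
  injective f -> exists2 B, B = A \/ B = ~` A & exists p1 p2 p3 p4,
    [/\ B p1, B p2, B p3, B p4 &
        [/\ p1 <> p2, p1 <> p3, p1 <> p4, p2 <> p3 & p2 <> p4 /\ p3 <> p4]].
Proof.
move=> f_inj.
have four (S : {set 'I_7}) B : (4 <= #|S|)%N -> (forall i, i \in S -> B (f i)) ->
    exists p1 p2 p3 p4, [/\ B p1, B p2, B p3, B p4 &
      [/\ p1 <> p2, p1 <> p3, p1 <> p4, p2 <> p3 & p2 <> p4 /\ p3 <> p4]].
  move=> S4 SB; pose g (k : nat) := f (enum_val (widen_ord S4 (inord k))).
  have gB k : B (g k) by apply: SB; exact: enum_valP.
  have g_neq k l : (k < 4)%N -> (l < 4)%N -> k != l -> g k <> g l.
    move=> k4 l4 /eqP kl /f_inj /enum_val_inj /(congr1 val).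
    by rewrite /= !inordK.
  by exists (g 0), (g 1), (g 2), (g 3); do !split=> //; apply: g_neq.
pose S := [set i | `[< A (f i) >]]%SET.
have [S4|S3] := leqP 4 #|S|.
  exists A; first by left.
  by apply: (four S A S4) => i; rewrite inE => /asboolP.
exists (~` A); first by right.
apply: (four (~: S)%SET (~` A)).
  by move: S3; have := cardsC S; rewrite card_ord; move: #|S| #|~: S|%SET; lia.
by move=> i; rewrite !inE => /asboolP.
Qed.

Lemma not_outermost_three_points (E : topologicalType) (gamma : set (set E)) S :
  nonperipheral gamma -> ~ outermost gamma -> gamma S ->
  exists p q r, [/\ S p, S q, S r & [/\ p <> q, p <> r & q <> r]].
Proof.
move=> np_gamma not_out gS; have [p [q [Sp Sq pq]]] := np_gamma.2 S gS.
apply: contrapT => no_r; apply: not_out; split=> //; exists S; split=> //.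
exists p, q; split=> //; apply/seteqP; split=> [r Sr|r [->|->]] //=.
apply: contrapT => /not_orP [rp rq]; apply: no_r.
by exists p, q, r; split=> //; split=> // /esym.
Qed.

Lemma not_outermost_valence_gt2 (E : topologicalType) (gamma : set (set E)) :
  stone_space E -> @second_countable E -> (exists f : 'I_7 -> E, injective f) ->
  nonperipheral gamma -> ~ outermost gamma ->
  exists G, [/\ pants_decomposition G, G gamma & ~ valence_le2 G gamma].
Proof.
move=> [cE hE tdE] scE [f f_inj] np_gamma not_out.
have zdE := stone_zero_dimensional cE hE tdE.
have [e [e_clopen e_surj]] := clopen_enumeration (f ord0) cE scE.
have [U [cU _ _ gammaU]] := np_gamma.1.
have [V VU [a [b [c [d [Va Vb Vc Vd [ab ac ad bc [bd cd]]]]]]]] :=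
  seven_points_four_on_a_side U f_inj.
have cV : clopen V by case: VU => ->; [|exact: clopen_setC].
have gammaV : gamma = cut_of V by rewrite gammaU; case: VU => ->; rewrite ?cut_ofC.
have [x [y [z [Vx Vy Vz [xy xz yz]]]]] : exists x y z,
    [/\ ~ V x, ~ V y, ~ V z & [/\ x <> y, x <> z & y <> z]].
  by apply: (not_outermost_three_points np_gamma not_out); rewrite gammaV; right.
have sep := zero_dimensional_separate zdE.
have [K1 [cK1 K1a K1b K1c K1d]] := sep _ _ _ _ ac ad bc bd.
have [K2 [cK2 K2x K2y K2z _]] := sep _ _ _ _ xz xz yz yz.
have [Kab [cKab Kab_a _ Kab_b _]] := sep _ _ _ _ ab ab ab ab.
have [Kcd [cKcd Kcd_c _ Kcd_d _]] := sep _ _ _ _ cd cd cd cd.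
have [Kxy [cKxy Kxy_x _ Kxy_y _]] := sep _ _ _ _ xy xy xy xy.
rewrite gammaV; apply: (pants_with_three_adjacent e_clopen e_surj cV cK1 cK2 cKab
  cKcd cKxy Va Vb Vc Vd Vx Vy Vz K1a K1b K1c K1d K2x K2y K2z Kab_a Kab_b Kcd_c
  Kcd_d Kxy_x Kxy_y).
Qed.

Unset Implicit Arguments.

Theorem mainTheorem7 (E : topologicalType)
  (hE : stone_space E) (hsc : @second_countable E)
  (h7 : exists f : 'I_7 -> E, injective f)
  (gamma : set (set E)) (hg : nonperipheral gamma) :
  outermost gamma <->
  (forall G : set (set (set E)), pants_decomposition G -> G gamma ->
     valence_le2 G gamma).
Proof.
split.
- move=> [_ [U [gammaU [x [y [xy Uxy]]]]]] G [_ G_np G_compat G_max _].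
  rewrite (cut_ofE hg.1 gammaU) Uxy.
  exact: outermost_valence_le2 xy G_np G_compat G_max.
- move=> valence; apply: contrapT => not_out.
  have [G [G_pants G_gamma G_valence]] := not_outermost_valence_gt2 hE hsc h7 hg not_out.
  exact/G_valence/valence.
Qed.
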